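(* For any instance of the online volunteer notification problem, the ex ante solution $\mathbf{x}^*$ satisfies $f(\mathbf{x}^* )\ge\left(1-\frac1e\right)\mathbf{LP}$.
   Context: Instance data: volunteers $[V]$, task types $[S]$, horizon $T$, arrival probabilities $\lambda_{s,t}\ge0$ with $\sum_{s=1}^S\lambda_{s,t}\le1$, match probabilities $p_{v,s}\in[0,1]$, and a probability mass function $g$ on the positive integers with CDF $G(\tau)=\sum_{i\le\tau}g(i)$, $G(0)=0$. $\mathcal{P}$: set of $\mathbf{x}\in\mathbb{R}^{V\times S\times T}$ with $0\le x_{v,s,t}\le1$ and $\sum_{\tau=1}^t\sum_{s=1}^S\lambda_{s,\tau}x_{v,s,\tau}(1-G(t-\tau))\le1$ for all $v,t$. $\mathbf{LP}=\max_{\mathbf{x}\in\mathcal{P}}\sum_{t=1}^T\sum_{s=1}^S\lambda_{s,t}\min\{\sum_v x_{v,s,t}p_{v,s},1\}$. $f(\mathbf{x})=\sum_{t=1}^T\sum_{s=1}^S\lambda_{s,t}\big(1-\prod_{v=1}^V(1-x_{v,s,t}p_{v,s})\big)$. Candidates: $\mathbf{x}^*_{LP}$ is an optimal solution of $\mathbf{LP}$; $\mathbf{x}^*_{AA}$ is the output of the procedure (for some $m\in\mathbb{N}$): $\mathbf{x}^0=\mathbf{0}$; for $i=1,\dots,m$, $\mathbf{y}^i\in\arg\max_{\mathbf{x}\in\mathcal{P}}\langle\mathbf{x},\nabla f(\mathbf{x}^{i-1})\rangle$ and $\mathbf{x}^i=\mathbf{x}^{i-1}+\frac1m\mathbf{y}^i$;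 output $\mathbf{x}^m$. $\mathbf{x}^*_{SQ}$ is built for $v=1,\dots,V$ in order: $(x^{SQ}_{v,s,t})_{s\in[S],t\in[T]}$ is an optimal solution of $\max\sum_{t,s}\lambda_{s,t}\big(\prod_{u<v}(1-p_{u,s}x^{SQ}_{u,s,t})\big)p_{v,s}x_{v,s,t}$ subject to $0\le x_{v,s,t}\le1$ for all $s,t$ and $\sum_{\tau=1}^t\sum_s\lambda_{s,\tau}x_{v,s,\tau}(1-G(t-\tau))\le1$ for all $t$. The ex ante solution is $\mathbf{x}^*\in\arg\max_{\mathbf{x}\in\{\mathbf{x}^*_{LP},\mathbf{x}^*_{AA},\mathbf{x}^*_{SQ}\}}f(\mathbf{x})$. *)

From mathcomp Require Import all_boot all_order all_algebra.
From mathcomp Require Import all_classical all_reals all_analysis.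
Set Implicit Arguments. Unset Strict Implicit. Unset Printing Implicit Defensive.
Import Order.TTheory GRing.Theory Num.Theory.
Local Open Scope ring_scope.
Local Open Scope classical_set_scope.

(* Indexing convention: volunteers 'I_V, task types 'I_S, time periods 'I_T
   where the ordinal t stands for period t+1.  Since only differences of
   periods t - tau (with tau <= t) appear, the shift is harmless. *)

Section Defs.
Variables (R : realType) (V S T : nat).

Definition vecT := 'I_V -> 'I_S -> 'I_T -> R.

Definition cdf (g : nat -> R) (k : nat) : R := \sum_(1 <= i < k.+1) g i.

Definition is_pmf_pos (g : nat -> R) : Prop :=
  (forall i, (0 < i)%N -> 0 <= g i) /\
  series (fun n => g n.+1) @ \oo --> (1 : R^o).

Definition instance_ok (lam : 'I_S -> 'I_T -> R) (p : 'I_V -> 'I_S -> R)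
  (g : nat -> R) : Prop :=
  (forall s t, 0 <= lam s t) /\
  (forall t, \sum_(s < S) lam s t <= 1) /\
  (forall v s, 0 <= p v s <= 1) /\
  is_pmf_pos g.

Definition row_feasible (lam : 'I_S -> 'I_T -> R) (g : nat -> R)
  (y : 'I_S -> 'I_T -> R) : Prop :=
  (forall s t, 0 <= y s t <= 1) /\
  (forall t : 'I_T,
     \sum_(tau < T | (tau <= t)%N) \sum_(s < S)
        lam s tau * y s tau * (1 - cdf g (t - tau)) <= 1).

Definition inP lam g (x : vecT) : Prop := forall v, row_feasible lam g (x v).

Definition LPobj (lam : 'I_S -> 'I_T -> R) (p : 'I_V -> 'I_S -> R) (x : vecT) : R :=
  \sum_(t < T) \sum_(s < S) lam s t * Num.min (\sum_(v < V) x v s t * p v s) 1.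

Definition LP_optimal lam p g (x : vecT) : Prop :=
  inP lam g x /\ forall y, inP lam g y -> LPobj lam p y <= LPobj lam p x.

Definition fobj (lam : 'I_S -> 'I_T -> R) (p : 'I_V -> 'I_S -> R) (x : vecT) : R :=
  \sum_(t < T) \sum_(s < S)
     lam s t * (1 - \prod_(v < V) (1 - x v s t * p v s)).

Definition grad_f lam p (x : vecT) : vecT :=
  fun v s t => lam s t * p v s * \prod_(u < V | u != v) (1 - x u s t * p u s).

Definition inner (x y : vecT) : R :=
  \sum_(v < V) \sum_(s < S) \sum_(t < T) x v s t * y v s t.

Definition is_AA_output lam p g (x : vecT) : Prop :=
  exists (m : nat) (xs ys : nat -> vecT),
    (0 < m)%N /\
    xs 0%N = (fun _ _ _ => 0) /\
    (forall i, (1 <= i <= m)%N ->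
       inP lam g (ys i) /\
       (forall y, inP lam g y ->
          inner y (grad_f lam p (xs i.-1)) <= inner (ys i) (grad_f lam p (xs i.-1))) /\
       xs i = (fun v s t => xs i.-1 v s t + m%:R^-1 * ys i v s t)) /\
    x = xs m.

Definition SQ_obj lam p (x : vecT) (v : 'I_V) (y : 'I_S -> 'I_T -> R) : R :=
  \sum_(t < T) \sum_(s < S)
     lam s t * (\prod_(u < V | (u < v)%N) (1 - p u s * x u s t)) * p v s * y s t.

Definition is_SQ_output lam p g (x : vecT) : Prop :=
  forall v : 'I_V,
    row_feasible lam g (x v) /\
    forall y, row_feasible lam g y -> SQ_obj lam p x v y <= SQ_obj lam p x v (x v).

End Defs.

From mathcomp Require Import all_boot all_order all_algebra.
From mathcomp Require Import all_classical all_reals all_analysis.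
From mathcomp Require Import lra.
Set Implicit Arguments.
Unset Strict Implicit.
Unset Printing Implicit Defensive.

Import Order.TTheory GRing.Theory Num.Theory.
Local Open Scope ring_scope.

(* Only the LP candidate is needed: by the correlation-gap inequality
   1 - prod_v (1 - a_v) >= (1 - 1/e) min(sum_v a_v, 1) for a_v in [0, 1],
   applied termwise with a_v = x_{v,s,t} p_{v,s}, the optimal LP solution
   already satisfies f(x_LP) >= (1 - 1/e) LP, and x* is at least as good.
   The inequality follows from 1 - a <= e^{-a} and the concavity of
   s |-> 1 - e^{-s}, which lies above its chord s (1 - 1/e) on [0, 1]. *)

Section CorrelationGap.
Variable R : realType.

Lemma expRN_le_chord (s : R) : 0 <= s <= 1 ->
  expR (- s) <= s * (expR 1)^-1 + (1 - s).
Proof.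
move=> /andP[s0 s1].
have := @convex_expR R (Itv01 s0 s1) (-1) 0.
by rewrite !convRE /= expR0 mulr0 addr0 mulr1 mulrN1 !expRN.
Qed.

Lemma prod_1B_le_expRN_sum (I : finType) (a : I -> R) :
  (forall i, 0 <= a i <= 1) ->
  \prod_i (1 - a i) <= expR (- \sum_i a i).
Proof.
move=> a01; rewrite -sumrN expR_sum; apply: ler_prod => i _.
have /andP[_ a1] := a01 i; rewrite subr_ge0 a1 /=.
by have := expR_ge1Dx (- a i); rewrite addrC.
Qed.

Lemma correlation_gap (I : finType) (a : I -> R) :
  (forall i, 0 <= a i <= 1) ->
  (1 - (expR 1)^-1) * Num.min (\sum_i a i) 1 <= 1 - \prod_i (1 - a i).
Proof.
move=> a01; apply: (le_trans _ (lerB (lexx 1) (prod_1B_le_expRN_sum a01))).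
set s := \sum_i a i.
have s0 : 0 <= s by apply: sumr_ge0 => i _; have /andP[] := a01 i.
have [s1|s1] := leP s 1.
  by have := expRN_le_chord (introT andP (conj s0 s1)); lra.
by rewrite mulr1 lerD2l lerN2 -expRN ler_expR lerN2 ltW.
Qed.

End CorrelationGap.

Lemma LPobj_le_fobj (R : realType) (V S T : nat)
    (lam : 'I_S -> 'I_T -> R) (p : 'I_V -> 'I_S -> R) (x : vecT R V S T) :
  (forall s t, 0 <= lam s t) -> (forall v s, 0 <= p v s <= 1) ->
  (forall v s t, 0 <= x v s t <= 1) ->
  (1 - (expR 1)^-1) * LPobj lam p x <= fobj lam p x.
Proof.
move=> lam0 p01 x01; rewrite /LPobj /fobj mulr_sumr; apply: ler_sum => t _.
rewrite mulr_sumr; apply: ler_sum => s _.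
rewrite mulrCA ler_wpM2l //; apply: correlation_gap => v.
have /andP[x0 x1] := x01 v s t; have /andP[p0 p1] := p01 v s.
by rewrite mulr_ge0 //= mulr_ile1.
Qed.

Theorem proposition2 (R : realType) (V S T : nat)
  (lam : 'I_S -> 'I_T -> R) (p : 'I_V -> 'I_S -> R) (g : nat -> R)
  (xLP xAA xSQ xstar : vecT R V S T) :
  instance_ok lam p g ->
  LP_optimal lam p g xLP ->
  is_AA_output lam p g xAA ->
  is_SQ_output lam p g xSQ ->
  (xstar = xLP \/ xstar = xAA \/ xstar = xSQ) ->
  fobj lam p xLP <= fobj lam p xstar ->
  fobj lam p xAA <= fobj lam p xstar ->
  fobj lam p xSQ <= fobj lam p xstar ->
  (1 - (expR 1)^-1) * LPobj lam p xLP <= fobj lam p xstar.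
Proof.
move=> [lam0 [_ [p01 _]]] [xLP_feasible _] _ _ _ LP_le_star _ _.
apply: le_trans LP_le_star; apply: LPobj_le_fobj => // v s t.
by have [x01 _] := xLP_feasible v; exact: x01.
Qed.
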